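(* Let $A$ (in $\mathcal H$) and $B$ (in $\mathcal K$) be closed densely defined operators with $A\dashv B$, with a (possibly unbounded) intertwining operator $T$. Then: (i) $\sigma_p(A)\subseteq\sigma_p(B)$; more precisely, if $\xi\in D(A)$ is an eigenvector of $A$ with eigenvalue $\lambda$, then $T\xi$ is an eigenvector of $B$ with eigenvalue $\lambda$, and for every $\lambda\in\sigma_p(A)$ one has $m_A(\lambda)\le m_B(\lambda)$, where $m_C(\lambda)$ denotes the multiplicity of $\lambda$ as an eigenvalue of $C$. (ii) If $TD(A)=D(B)$ and $T^{-1}$ is bounded, then $\sigma_p(A)=\sigma_p(B)$. (iii) If $T^{-1}$ is bounded and $TD(A)$ is a core for $B$, then $\sigma_p(B)\subseteq\sigma(A)$.
   Context: A closed, densely defined operator $T:\mathcal H\to\mathcal K$ is called an intertwining operator for $A$ and $B$ if: (io$_0$) $D(A)\subset D(T)$ and $D(TA)=D(A)$, i.e. $\xi\in D(A)$ implies $A\xi\in D(T)$; (io$_1$) $T$ maps $D(A)$ into $D(B)$; (io$_2$) $BT\xi=TA\xi$ for all $\xi\in D(A)$. We write $A\dashv B$ ($A$ is quasi-similar to $B$) if there exists an intertwining operator $T$ for $A$ and $B$ which is injective and whose inverse $T^{-1}$ (defined on the range of $T$) is densely defined. $\sigma_p$ denotes the point spectrum (set of eigenvalues), $\sigma$ the spectrum. ''$T^{-1}$ bounded'' means bounded on its domain, the range of $T$. *)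

From Stdlib Require Import Reals.
Open Scope R_scope.
Set Implicit Arguments.

Record C := mkC { Re : R; Im : R }.
Definition C0 : C := mkC 0 0.
Definition C1 : C := mkC 1 0.
Definition Cadd (a b : C) : C := mkC (Re a + Re b) (Im a + Im b).
Definition Cmul (a b : C) : C :=
  mkC (Re a * Re b - Im a * Im b) (Re a * Im b + Im a * Re b).
Definition Cconj (a : C) : C := mkC (Re a) (- Im a).

Record PreHilbert := {
  carrier :> Type;
  hzero : carrier;
  hadd : carrier -> carrier -> carrier;
  hopp : carrier -> carrier;
  hscal : C -> carrier -> carrier;
  inner : carrier -> carrier -> C;
  hadd_assoc : forall x y z, hadd x (hadd y z) = hadd (hadd x y) z;
  hadd_comm : forall x y, hadd x y = hadd y x;
  hadd_0 : forall x, hadd x hzero = x;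
  hadd_opp : forall x, hadd x (hopp x) = hzero;
  hscal_1 : forall x, hscal C1 x = x;
  hscal_assoc : forall a b x, hscal a (hscal b x) = hscal (Cmul a b) x;
  hscal_distr_v : forall a x y, hscal a (hadd x y) = hadd (hscal a x) (hscal a y);
  hscal_distr_s : forall a b x, hscal (Cadd a b) x = hadd (hscal a x) (hscal b x);
  inner_conj : forall x y, inner y x = Cconj (inner x y);
  inner_add_l : forall x y z, inner (hadd x y) z = Cadd (inner x z) (inner y z);
  inner_scal_l : forall a x y, inner (hscal a x) y = Cmul a (inner x y);
  inner_pos : forall x, 0 <= Re (inner x x);
  inner_def : forall x, inner x x = C0 -> x = hzero
}.

Definition hnorm {H : PreHilbert} (x : H) : R := sqrt (Re (inner H x x)).
Definition hsub {H : PreHilbert} (x y : H) : H := hadd H x (hopp H y).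
Definition hdist {H : PreHilbert} (x y : H) : R := hnorm (hsub x y).

Definition converges {H : PreHilbert} (u : nat -> H) (l : H) : Prop :=
  forall eps, eps > 0 -> exists N, forall n, (n >= N)%nat -> hdist (u n) l < eps.
Definition cauchy {H : PreHilbert} (u : nat -> H) : Prop :=
  forall eps, eps > 0 -> exists N, forall n m, (n >= N)%nat -> (m >= N)%nat ->
    hdist (u n) (u m) < eps.

Record Hilbert := {
  hpre :> PreHilbert;
  hcomplete : forall u : nat -> hpre, cauchy u -> exists l, converges u l
}.

Definition dense {H : PreHilbert} (P : H -> Prop) : Prop :=
  forall x eps, eps > 0 -> exists y, P y /\ hdist x y < eps.

(* An operator is a linear map defined on a linear subspace [dom] of H;
   [app] is only meaningful on [dom]. *)
Record Op (H K : PreHilbert) := {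
  dom : H -> Prop;
  app : H -> K;
  dom_zero : dom (hzero H);
  dom_add : forall x y, dom x -> dom y -> dom (hadd H x y);
  dom_scal : forall a x, dom x -> dom (hscal H a x);
  app_add : forall x y, dom x -> dom y -> app (hadd H x y) = hadd K (app x) (app y);
  app_scal : forall a x, dom x -> app (hscal H a x) = hscal K a (app x)
}.

Definition closed_op {H K : PreHilbert} (T : Op H K) : Prop :=
  forall (u : nat -> H) (l : H) (y : K),
    (forall n, dom T (u n)) -> converges u l -> converges (fun n => app T (u n)) y ->
    dom T l /\ app T l = y.

Definition densely_defined {H K : PreHilbert} (T : Op H K) : Prop := dense (dom T).

(* range of T = domain of T^{-1} *)
Definition range {H K : PreHilbert} (T : Op H K) (y : K) : Prop :=
  exists x, dom T x /\ app T x = y.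

Definition image_dom {H K : PreHilbert} (T : Op H K) (A : Op H H) (y : K) : Prop :=
  exists x, dom A x /\ app T x = y.

Definition injective_op {H K : PreHilbert} (T : Op H K) : Prop :=
  forall x y, dom T x -> dom T y -> app T x = app T y -> x = y.

(* T^{-1} bounded on its domain ran(T) *)
Definition inv_bounded {H K : PreHilbert} (T : Op H K) : Prop :=
  exists c, forall x, dom T x -> hnorm x <= c * hnorm (app T x).

Definition intertwining {H K : PreHilbert} (A : Op H H) (B : Op K K) (T : Op H K) : Prop :=
  closed_op T /\ densely_defined T /\
  (forall x, dom A x -> dom T x /\ dom T (app A x)) /\
  (forall x, dom A x -> dom B (app T x)) /\
  (forall x, dom A x -> app B (app T x) = app T (app A x)).

(* A ⊣ B, witnessed by the intertwining operator T:
   T injective and T^{-1} densely defined (i.e. ran T dense). *)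
Definition quasi_similar_via {H K : PreHilbert} (A : Op H H) (B : Op K K) (T : Op H K) : Prop :=
  intertwining A B T /\ injective_op T /\ dense (range T).

Definition quasi_similar {H K : PreHilbert} (A : Op H H) (B : Op K K) : Prop :=
  exists T, quasi_similar_via A B T.

Definition eigenvector {H : PreHilbert} (A : Op H H) (lam : C) (xi : H) : Prop :=
  dom A xi /\ xi <> hzero H /\ app A xi = hscal H lam xi.

Definition point_spectrum {H : PreHilbert} (A : Op H H) (lam : C) : Prop :=
  exists xi, eigenvector A lam xi.

Definition resolvent_set {H : PreHilbert} (A : Op H H) (lam : C) : Prop :=
  exists Rl : H -> H,
    (forall y, dom A (Rl y) /\ hsub (app A (Rl y)) (hscal H lam (Rl y)) = y) /\
    (forall x, dom A x -> Rl (hsub (app A x) (hscal H lam x)) = x) /\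
    (exists c, forall y, hnorm (Rl y) <= c * hnorm y).

Definition spectrum {H : PreHilbert} (A : Op H H) (lam : C) : Prop :=
  ~ resolvent_set A lam.

Fixpoint hsum {H : PreHilbert} (n : nat) (f : nat -> H) : H :=
  match n with
  | O => hzero H
  | S k => hadd H (hsum k f) (f k)
  end.

Definition lin_indep {H : PreHilbert} (n : nat) (v : nat -> H) : Prop :=
  forall a : nat -> C, hsum n (fun i => hscal H (a i) (v i)) = hzero H ->
    forall i, (i < n)%nat -> a i = C0.

Definition eig_dim_ge {H : PreHilbert} (A : Op H H) (lam : C) (n : nat) : Prop :=
  exists v : nat -> H,
    (forall i, (i < n)%nat -> dom A (v i) /\ app A (v i) = hscal H lam (v i)) /\
    lin_indep n v.

(* m_A(lam) <= m_B(lam), multiplicities taken in N ∪ {∞}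
   (m_C(lam) = dim ker(C - lam) = sup { n | eig_dim_ge C lam n }) *)
Definition mult_le {H K : PreHilbert} (A : Op H H) (B : Op K K) (lam : C) : Prop :=
  forall n, eig_dim_ge A lam n -> eig_dim_ge B lam n.

Definition core {K : PreHilbert} (B : Op K K) (D : K -> Prop) : Prop :=
  (forall y, D y -> dom B y) /\
  (forall y, dom B y -> forall eps, eps > 0 ->
     exists z, D z /\ hdist y z < eps /\ hdist (app B y) (app B z) < eps).

From Pilot Require Import Defs.
From Stdlib Require Import Reals Lra Lia Psatz ClassicalEpsilon.
Open Scope R_scope.

(* Let T be a closed, injective intertwining operator for A and B.
   (i)  If A xi = lam xi then B (T xi) = T (A xi) = lam (T xi), and T xi <> 0
        by injectivity; since T is linear and injective it also maps linearly
        independent eigenvectors to linearly independent eigenvectors, which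
        gives m_A(lam) <= m_B(lam).
   (ii) If T D(A) = D(B), every eigenvector y = T x of B pulls back: the
        equation T (A x) = B (T x) = lam (T x) = T (lam x) and injectivity give
        A x = lam x, so sigma_p(B) is contained in sigma_p(A).
   (iii) Let B y = lam y, y <> 0, and suppose lam is in the resolvent set of A.
        Using the core property pick x_n in D(A) with T x_n -> y and
        B T x_n -> lam y.  Then T (A - lam) x_n = (B - lam) T x_n -> 0, so
        (A - lam) x_n -> 0 because T^{-1} is bounded, hence x_n -> 0 because
        (A - lam)^{-1} is bounded.  Closedness of T then forces y = T 0 = 0.
   The file first develops the vector-space algebra of a pre-Hilbert space,
   the squared norm, and convergence expressed through squared norms (which
   avoids the triangle inequality); then the elementary facts about linear
   operators and cores; and finally the three transfer results above, from
   which the proposition follows directly. *)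

Definition Cabs2 (l : Defs.C) : R := Re l * Re l + Im l * Im l.

Lemma Cabs2_nonneg l : 0 <= Cabs2 l.
Proof. unfold Cabs2; nra. Qed.

Section VectorAlgebra.
Variable H : PreHilbert.
Notation "0h" := (hzero H).
Notation add := (hadd H).
Notation opp := (hopp H).
Notation scal := (hscal H).

Lemma add0l x : add 0h x = x.
Proof. rewrite hadd_comm; apply hadd_0. Qed.

Lemma opp_l x : add (opp x) x = 0h.
Proof. rewrite hadd_comm; apply hadd_opp. Qed.

Lemma add_eq_l a b : add a b = a -> b = 0h.
Proof.
  intro E. transitivity (add (add (opp a) a) b).
  - rewrite opp_l; symmetry; apply add0l.
  - rewrite <- hadd_assoc, E. apply opp_l.
Qed.

Lemma opp_unique u v : add u v = 0h -> v = opp u.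
Proof.
  intro E. transitivity (add (add (opp u) u) v).
  - rewrite opp_l; symmetry; apply add0l.
  - rewrite <- hadd_assoc, E. apply hadd_0.
Qed.

Lemma scal0 x : scal Defs.C0 x = 0h.
Proof.
  apply (add_eq_l (scal Defs.C0 x)).
  rewrite <- hscal_distr_s. f_equal. unfold Cadd, Defs.C0; simpl. f_equal; ring.
Qed.

(* The additive inverse is scaling by -1; this lets linear maps preserve it. *)
Lemma opp_scal x : opp x = scal (mkC (-1) 0) x.
Proof.
  symmetry. apply opp_unique.
  rewrite <- (hscal_1 H x) at 1. rewrite <- hscal_distr_s.
  replace (Cadd Defs.C1 (mkC (-1) 0)) with Defs.C0
    by (unfold Cadd, Defs.C0, Defs.C1; simpl; f_equal; ring).
  apply scal0.
Qed.

Lemma sub0 x : hsub x 0h = x.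
Proof.
  unfold hsub. replace (opp 0h) with 0h by (apply opp_unique, hadd_0).
  apply hadd_0.
Qed.

Lemma sub_add_telescope a b c : add (hsub a b) (add b c) = add a c.
Proof.
  unfold hsub. rewrite hadd_assoc. f_equal.
  rewrite <- hadd_assoc, opp_l. apply hadd_0.
Qed.

Lemma opp_sub a b : opp (hsub a b) = hsub b a.
Proof.
  symmetry. apply opp_unique. unfold hsub at 2. rewrite sub_add_telescope. apply hadd_opp.
Qed.

Lemma scal_opp l x : scal l (opp x) = opp (scal l x).
Proof.
  rewrite !opp_scal, !hscal_assoc. f_equal. destruct l; unfold Cmul; simpl.
  f_equal; ring.
Qed.

(* a - l z = (a - l y) + l (y - z): splits (B - lam) T x_n in part (iii). *)
Lemma sub_scal_shift a l y z :
  hsub a (scal l z) = add (hsub a (scal l y)) (scal l (hsub y z)).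
Proof.
  unfold hsub at 3. rewrite hscal_distr_v, scal_opp, sub_add_telescope. reflexivity.
Qed.

End VectorAlgebra.

Section SquaredNorm.
Variable H : PreHilbert.

Definition rinner (x y : H) : R := Re (inner H x y).
Definition sqnorm (x : H) : R := rinner x x.

Lemma rinner_sym x y : rinner x y = rinner y x.
Proof. unfold rinner. rewrite inner_conj. reflexivity. Qed.

Lemma rinner_addl x y z : rinner (hadd H x y) z = rinner x z + rinner y z.
Proof. unfold rinner. rewrite inner_add_l. reflexivity. Qed.

Lemma rinner_addr x y z : rinner z (hadd H x y) = rinner z x + rinner z y.
Proof. rewrite !(rinner_sym z). apply rinner_addl. Qed.

Lemma rinner_oppl x z : rinner (hopp H x) z = - rinner x z.
Proof.
  assert (E := rinner_addl x (hopp H x) z).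
  assert (E0 := rinner_addl (hzero H) (hzero H) z).
  rewrite hadd_opp in E. rewrite hadd_0 in E0. lra.
Qed.

Lemma rinner_oppr x z : rinner z (hopp H x) = - rinner z x.
Proof. rewrite !(rinner_sym z). apply rinner_oppl. Qed.

Lemma sqnorm_nonneg x : 0 <= sqnorm x.
Proof. apply inner_pos. Qed.

Lemma sqnorm_sub_sym a b : sqnorm (hsub a b) = sqnorm (hsub b a).
Proof.
  rewrite <- opp_sub. unfold sqnorm. rewrite rinner_oppl, rinner_oppr. ring.
Qed.

Lemma sqnorm_add_le a b : sqnorm (hadd H a b) <= 2 * sqnorm a + 2 * sqnorm b.
Proof.
  assert (Hd := sqnorm_nonneg (hadd H a (hopp H b))).
  unfold sqnorm in *. rewrite !rinner_addl, !rinner_addr, !rinner_oppl, !rinner_oppr in *.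
  rewrite (rinner_sym b a) in *. lra.
Qed.

Lemma sqnorm_scal l x : sqnorm (hscal H l x) = Cabs2 l * sqnorm x.
Proof.
  unfold sqnorm, rinner, Cabs2. rewrite inner_scal_l, inner_conj, inner_scal_l.
  assert (Im0 : Im (inner H x x) = 0).
  { assert (E := f_equal Im (inner_conj H x x)). simpl in E. lra. }
  destruct (inner H x x) as [r i]. simpl in *. subst i. destruct l; simpl. ring.
Qed.

Lemma hnorm_sq x : hnorm x * hnorm x = sqnorm x.
Proof. apply sqrt_sqrt, sqnorm_nonneg. Qed.

Lemma sqnorm_lt_of_hnorm_lt x e : hnorm x < e -> sqnorm x < e * e.
Proof.
  intro h. assert (h0 : 0 <= hnorm x) by apply sqrt_pos. rewrite <- hnorm_sq. nra.
Qed.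

Lemma hnorm_lt_of_sqnorm_lt x e : 0 < e -> sqnorm x < e * e -> hnorm x < e.
Proof.
  intros he h. assert (h0 : 0 <= hnorm x) by apply sqrt_pos. rewrite <- hnorm_sq in h. nra.
Qed.

Lemma hdist_sym (a b : H) : hdist a b = hdist b a.
Proof.
  unfold hdist, hnorm. change (sqrt (sqnorm (hsub a b)) = sqrt (sqnorm (hsub b a))).
  rewrite sqnorm_sub_sym. reflexivity.
Qed.

Definition sq_null (d : nat -> H) : Prop :=
  forall e, e > 0 -> exists N0, forall n, (n >= N0)%nat -> sqnorm (d n) < e.

Lemma converges_sq_null (u : nat -> H) l :
  converges u l <-> sq_null (fun n => hsub (u n) l).
Proof.
  split.
  - intros hu e he. destruct (hu (sqrt e)) as [N0 hN0]; [apply sqrt_lt_R0; lra|].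
    exists N0. intros n hn. rewrite <- (sqrt_sqrt e) by lra.
    apply sqnorm_lt_of_hnorm_lt, hN0, hn.
  - intros hu e he. destruct (hu (e * e)) as [N0 hN0]; [nra|].
    exists N0. intros n hn. apply hnorm_lt_of_sqnorm_lt; auto.
Qed.

Lemma converges_sq_null_rev (u : nat -> H) l :
  converges u l -> sq_null (fun n => hsub l (u n)).
Proof.
  intros hu e he. destruct (proj1 (converges_sq_null u l) hu e he) as [N0 hN0].
  exists N0. intros n hn. rewrite sqnorm_sub_sym. auto.
Qed.

Lemma sq_null_ext (a b : nat -> H) : (forall n, a n = b n) -> sq_null a -> sq_null b.
Proof.
  intros E ha e he. destruct (ha e he) as [N0 hN0]. exists N0. intros n hn.
  rewrite <- E. auto.
Qed.

Lemma sq_null_add (a b : nat -> H) :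
  sq_null a -> sq_null b -> sq_null (fun n => hadd H (a n) (b n)).
Proof.
  intros ha hb e he.
  destruct (ha (e / 4)) as [Na hNa]; [lra|]. destruct (hb (e / 4)) as [Nb hNb]; [lra|].
  exists (max Na Nb). intros n hn.
  assert (la := hNa n ltac:(lia)). assert (lb := hNb n ltac:(lia)).
  assert (s := sqnorm_add_le (a n) (b n)). lra.
Qed.

End SquaredNorm.

Arguments sqnorm {H}.
Arguments sq_null {H}.

Lemma sq_null_dominated (H K : PreHilbert) (a : nat -> H) (b : nat -> K) c :
  0 <= c -> (forall n, sqnorm (a n) <= c * sqnorm (b n)) -> sq_null b -> sq_null a.
Proof.
  intros hc hab hb e he. destruct (hb (e / (c + 1))) as [N0 hN0].
  { apply Rdiv_lt_0_compat; lra. }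
  exists N0. intros n hn. assert (h := hN0 n hn). assert (p := sqnorm_nonneg K (b n)).
  assert (q : c * sqnorm (b n) <= c * (e / (c + 1))) by (apply Rmult_le_compat_l; lra).
  assert (r : c * (e / (c + 1)) < e).
  { unfold Rdiv. apply (Rmult_lt_reg_r (c + 1)); [lra|].
    rewrite Rmult_assoc, Rmult_assoc, Rinv_l by lra. nra. }
  specialize (hab n). lra.
Qed.

Lemma sq_null_scal (H : PreHilbert) (a : nat -> H) l :
  sq_null a -> sq_null (fun n => hscal H l (a n)).
Proof.
  apply (sq_null_dominated H H _ a (Cabs2 l) (Cabs2_nonneg l)).
  intro n. rewrite sqnorm_scal. apply Rle_refl.
Qed.

Lemma sqnorm_le_of_hnorm_le (H K : PreHilbert) (x : H) (y : K) c :
  hnorm x <= c * hnorm y -> sqnorm x <= c * c * sqnorm y.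
Proof.
  intro h. rewrite <- !hnorm_sq.
  assert (h0 : 0 <= hnorm x) by apply sqrt_pos. assert (h1 : 0 <= hnorm y) by apply sqrt_pos.
  nra.
Qed.

Section LinearOperators.
Variables H K : PreHilbert.
Variable T : Op H K.

Lemma app_zero : app T (hzero H) = hzero K.
Proof.
  apply (add_eq_l K (app T (hzero H))).
  rewrite <- app_add by apply dom_zero. rewrite hadd_0. reflexivity.
Qed.

Lemma dom_sub x y : dom T x -> dom T y -> dom T (hsub x y).
Proof. intros. apply dom_add; auto. rewrite opp_scal. apply dom_scal; auto. Qed.

Lemma app_sub x y : dom T x -> dom T y -> app T (hsub x y) = hsub (app T x) (app T y).
Proof.
  intros. unfold hsub. rewrite !opp_scal, app_add, app_scal; auto.
  apply dom_scal; auto.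
Qed.

Lemma app_hsum n (a : nat -> Defs.C) (v : nat -> H) :
  (forall i, (i < n)%nat -> dom T (v i)) ->
  dom T (hsum n (fun i => hscal H (a i) (v i))) /\
  app T (hsum n (fun i => hscal H (a i) (v i))) = hsum n (fun i => hscal K (a i) (app T (v i))).
Proof.
  induction n as [|n IH]; intros hv; simpl.
  - split; [apply dom_zero | apply app_zero].
  - destruct IH as [d e]; [intros; apply hv; lia|].
    assert (dv : dom T (hscal H (a n) (v n))) by (apply dom_scal; apply hv; lia).
    split; [apply dom_add; auto|].
    rewrite app_add, e, app_scal; auto.
Qed.

Lemma injective_kernel x :
  injective_op T -> dom T x -> app T x = hzero K -> x = hzero H.
Proof. intros inj dx e. apply inj; auto; [apply dom_zero | rewrite app_zero; auto]. Qed.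

End LinearOperators.

Lemma converges_of_approx (H : PreHilbert) (u : nat -> H) l :
  (forall n, hdist l (u n) < / (INR n + 1)) -> converges u l.
Proof.
  intros hu eps heps. destruct (INR_archimed eps 1 heps) as [N0 hN0].
  exists N0. intros n hn. rewrite hdist_sym.
  apply le_INR in hn. assert (pn : 0 < INR n + 1) by (pose proof (pos_INR n); lra).
  apply (Rlt_trans _ (/ (INR n + 1))); auto.
  apply (Rmult_lt_reg_r (INR n + 1)); auto. rewrite Rinv_l by lra. nra.
Qed.

Lemma core_sequence (K : PreHilbert) (B : Op K K) D y :
  core B D -> dom B y ->
  exists z : nat -> K, (forall n, D (z n)) /\ converges z y /\
    converges (fun n => app B (z n)) (app B y).
Proof.
  intros [_ approx] dy.
  assert (ex : forall n, exists z, D z /\ hdist y z < / (INR n + 1) /\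
                                  hdist (app B y) (app B z) < / (INR n + 1)).
  { intro n. apply approx; auto. apply Rinv_0_lt_compat. pose proof (pos_INR n); lra. }
  destruct (choice _ ex) as [z hz].
  exists z. split; [|split]; [apply hz | |]; apply converges_of_approx; apply hz.
Qed.

Section Intertwining.
Variables H K : PreHilbert.
Variables (A : Op H H) (B : Op K K) (T : Op H K).
Hypothesis io0 : forall x, dom A x -> dom T x /\ dom T (app A x).
Hypothesis io1 : forall x, dom A x -> dom B (app T x).
Hypothesis io2 : forall x, dom A x -> app B (app T x) = app T (app A x).
Hypothesis injT : injective_op T.

Lemma intertwine_eigen_eq lam x :
  dom A x -> app A x = hscal H lam x -> app B (app T x) = hscal K lam (app T x).
Proof.
  intros dx e. destruct (io0 x dx). rewrite io2, e, app_scal; auto.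
Qed.

Lemma eigenvector_transfer lam xi : eigenvector A lam xi -> eigenvector B lam (app T xi).
Proof.
  intros [dx [nz e]]. split; [|split].
  - apply io1; auto.
  - intro z. apply nz, (injective_kernel _ _ T); auto. apply io0; auto.
  - apply intertwine_eigen_eq; auto.
Qed.

Lemma point_spectrum_transfer lam : point_spectrum A lam -> point_spectrum B lam.
Proof. intros [xi h]. exists (app T xi). apply eigenvector_transfer; auto. Qed.

Lemma multiplicity_transfer lam : mult_le A B lam.
Proof.
  intros n [v [hv indep]]. exists (fun i => app T (v i)). split.
  - intros i hi. destruct (hv i hi) as [d e].
    split; [apply io1; auto | apply intertwine_eigen_eq; auto].
  - intros a ha. apply indep.
    assert (hd : forall i, (i < n)%nat -> dom T (v i)).
    { intros i hi. apply (io0 _ (proj1 (hv i hi))). }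
    destruct (app_hsum _ _ T n a v hd) as [d e].
    apply (injective_kernel _ _ T); auto. rewrite e; auto.
Qed.

Lemma point_spectrum_pullback lam :
  (forall y, dom B y -> image_dom T A y) -> point_spectrum B lam -> point_spectrum A lam.
Proof.
  intros hBD [y [dy [nz e]]]. destruct (hBD y dy) as [x [dx ex]]. subst y.
  destruct (io0 x dx) as [d1 d2].
  exists x. split; [|split]; auto.
  - intro z. apply nz. subst x. apply app_zero.
  - apply injT; auto; [apply dom_scal; auto|].
    rewrite <- io2, e, app_scal; auto.
Qed.

Lemma intertwine_shift lam x :
  dom A x ->
  app T (hsub (app A x) (hscal H lam x)) = hsub (app B (app T x)) (hscal K lam (app T x)).
Proof.
  intro dx. destruct (io0 x dx).
  rewrite app_sub, app_scal, io2; auto. apply dom_scal; auto.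
Qed.

Lemma point_spectrum_in_spectrum lam :
  closed_op T -> inv_bounded T -> core B (image_dom T A) ->
  point_spectrum B lam -> spectrum A lam.
Proof.
  intros cT [c1 hc1] hcore [y [dy [nz ey]]] [Rl [_ [hR [c0 hc0]]]].
  destruct (core_sequence K B _ y hcore dy) as [z [hz [zy Bzy]]].
  destruct (choice _ hz) as [xs hxs].
  set (w := fun n => hsub (app A (xs n)) (hscal H lam (xs n))).
  assert (dx : forall n, dom A (xs n)) by apply hxs.
  assert (dw : forall n, dom T (w n)).
  { intro n. destruct (io0 _ (dx n)). apply dom_sub; auto. apply dom_scal; auto. }
  assert (Tw_null : sq_null (fun n => app T (w n))).
  { apply (sq_null_ext K
      (fun n => hadd K (hsub (app B (z n)) (app B y)) (hscal K lam (hsub y (z n))))).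
    { intro n. unfold w. rewrite intertwine_shift by auto. destruct (hxs n) as [_ ->].
      rewrite ey. symmetry. apply sub_scal_shift. }
    apply sq_null_add; [apply converges_sq_null; auto|].
    apply sq_null_scal, converges_sq_null_rev; auto. }
  assert (w_null : sq_null w).
  { apply (sq_null_dominated H K w (fun n => app T (w n)) (c1 * c1)); [nra| |auto].
    intro n. apply sqnorm_le_of_hnorm_le, hc1, dw. }
  assert (x_null : sq_null xs).
  { apply (sq_null_dominated H H xs w (c0 * c0)); [nra| |auto].
    intro n. rewrite <- (hR (xs n) (dx n)). apply sqnorm_le_of_hnorm_le, hc0. }
  destruct (cT xs (hzero H) y) as [_ T0y].
  - intro n. apply io0, dx.
  - apply converges_sq_null. apply (sq_null_ext H xs); auto.
    intro n. symmetry. apply sub0.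
  - intros e he. destruct (zy e he) as [N0 hN0]. exists N0. intros n hn.
    destruct (hxs n) as [_ ->]. auto.
  - apply nz. rewrite <- T0y. apply app_zero.
Qed.

End Intertwining.

Theorem proposition2p9 (H K : Hilbert) (A : Op H H) (B : Op K K) (T : Op H K) :
  closed_op A -> densely_defined A ->
  closed_op B -> densely_defined B ->
  quasi_similar_via A B T ->
  (* (i) *)
  ((forall lam, point_spectrum A lam -> point_spectrum B lam) /\
   (forall lam xi, eigenvector A lam xi -> eigenvector B lam (app T xi)) /\
   (forall lam, point_spectrum A lam -> mult_le A B lam)) /\
  (* (ii) *)
  ((forall y, dom B y <-> image_dom T A y) -> inv_bounded T ->
     forall lam, point_spectrum A lam <-> point_spectrum B lam) /\
  (* (iii) *)
  (inv_bounded T -> core B (image_dom T A) ->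
     forall lam, point_spectrum B lam -> spectrum A lam).
Proof.
  intros _ _ _ _ [[cT [_ [io0 [io1 io2]]]] [injT _]].
  split; [split; [|split] | split].
  - apply (point_spectrum_transfer _ _ A B T); auto.
  - apply (eigenvector_transfer _ _ A B T); auto.
  - intros lam _. apply (multiplicity_transfer _ _ A B T); auto.
  - intros hBD _ lam. split.
    + apply (point_spectrum_transfer _ _ A B T); auto.
    + apply (point_spectrum_pullback _ _ A B T); auto. apply hBD.
  - intros hinv hcore lam. apply (point_spectrum_in_spectrum _ _ A B T); auto.
Qed.
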